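(* Let $x$, $y$, $z$ be non-zero octonions, and define \[ [x,y,z] = \bigl(z^{-1}(y^{-1}x^{-1})\bigr)\bigl(x(yz)\bigr). \] Then \[ \bigl((xy)z\bigr)[x,y,z] = x(yz) \qquad\text{and}\qquad (xy)z = \bigl(x(yz)\bigr)\,\overline{[x,y,z]}, \] where $\overline{q}$ denotes the octonion conjugate of $q$.
   Context: Octonion multiplication is non-associative and non-commutative. Every non-zero octonion $q$ has a multiplicative inverse $q^{-1}$, satisfying $q q^{-1} = q^{-1} q = 1$. In each product above, the parentheses indicate the order of evaluation. *)

From HB Require Import structures.
From mathcomp Require Import all_boot all_order all_algebra.
From mathcomp Require Import reals.
Set Implicit Arguments. Unset Strict Implicit. Unset Printing Implicit Defensive.
Import Order.TTheory GRing.Theory Num.Theory.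
Local Open Scope ring_scope.

(* Generic Cayley-Dickson doubling of an algebra with conjugation (T, add, opp, mul, conj):
   (a,b)(c,d) = (a c - conj(d) b, d a + b conj(c)), conj((a,b)) = (conj(a), -b). *)
Section CayleyDickson.
Variables (T : Type) (add : T -> T -> T) (opp : T -> T) (mul : T -> T -> T)
  (conj : T -> T).
Definition cd_add (x y : T * T) : T * T := (add x.1 y.1, add x.2 y.2).
Definition cd_opp (x : T * T) : T * T := (opp x.1, opp x.2).
Definition cd_mul (x y : T * T) : T * T :=
  (add (mul x.1 y.1) (opp (mul (conj y.2) x.2)),
   add (mul y.2 x.1) (mul x.2 (conj y.1))).
Definition cd_conj (x : T * T) : T * T := (conj x.1, opp x.2).
End CayleyDickson.

Definition cd_scale (S T : Type) (sc : S -> T -> T) (r : S) (x : T * T) : T * T :=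
  (sc r x.1, sc r x.2).

Section Octonions.
Variable R : realType.

Definition cpx := (R * R)%type.
Definition quat := (cpx * cpx)%type.
Definition oct := (quat * quat)%type.

Definition cpx_add : cpx -> cpx -> cpx := @cd_add R +%R.
Definition cpx_opp : cpx -> cpx := @cd_opp R -%R.
Definition cpx_mul : cpx -> cpx -> cpx := @cd_mul R +%R -%R *%R id.
Definition cpx_conj : cpx -> cpx := @cd_conj R -%R id.
Definition cpx_scale : R -> cpx -> cpx := @cd_scale R R *%R.

Definition quat_add : quat -> quat -> quat := @cd_add cpx cpx_add.
Definition quat_opp : quat -> quat := @cd_opp cpx cpx_opp.
Definition quat_mul : quat -> quat -> quat := @cd_mul cpx cpx_add cpx_opp cpx_mul cpx_conj.
Definition quat_conj : quat -> quat := @cd_conj cpx cpx_opp cpx_conj.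
Definition quat_scale : R -> quat -> quat := @cd_scale R cpx cpx_scale.

Definition oct_mul : oct -> oct -> oct := @cd_mul quat quat_add quat_opp quat_mul quat_conj.
Definition oct_conj : oct -> oct := @cd_conj quat quat_opp quat_conj.
Definition oct_scale : R -> oct -> oct := @cd_scale R quat quat_scale.

Definition oct0 : oct := (((0, 0), (0, 0)), ((0, 0), (0, 0))).
Definition oct1 : oct := (((1, 0), (0, 0)), ((0, 0), (0, 0))).

(* squared Euclidean norm: q * conj q = oct_norm2 q * 1 *)
Definition oct_norm2 (q : oct) : R :=
  let: (((a0, a1), (a2, a3)), ((a4, a5), (a6, a7))) := q in
  a0 ^+ 2 + a1 ^+ 2 + a2 ^+ 2 + a3 ^+ 2 + a4 ^+ 2 + a5 ^+ 2 + a6 ^+ 2 + a7 ^+ 2.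

Definition oct_inv (q : oct) : oct := oct_scale (oct_norm2 q)^-1 (oct_conj q).

Definition oct_bracket (x y z : oct) : oct :=
  oct_mul (oct_mul (oct_inv z) (oct_mul (oct_inv y) (oct_inv x)))
          (oct_mul x (oct_mul y z)).
End Octonions.

(* The bracket collapses to a quotient: inversion reverses products
   (conjugation does, and the norm is multiplicative), so
   [z^{-1}(y^{-1}x^{-1}) = ((xy)z)^{-1}] and [[x,y,z] = a^{-1} b] with
   [a = (xy)z], [b = x(yz)].  Both identities then follow from the
   alternative law [p (conj p q) = |p|^2 q] together with [|a| = |b|]. *)
From mathcomp Require Import all_boot all_order all_algebra.
From mathcomp Require Import reals ring.
Import Order.TTheory GRing.Theory Num.Theory.
Local Open Scope ring_scope.

Ltac oct_unfold := cbv beta iota zeta delta [oct_mul oct_conj oct_scale oct_norm2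
  quat_mul quat_conj quat_add quat_opp quat_scale
  cpx_mul cpx_conj cpx_add cpx_opp cpx_scale
  cd_mul cd_conj cd_add cd_opp cd_scale fst snd].
Ltac oct_case p := case: p => [[[? ?] [? ?]] [[? ?] [? ?]]].
Ltac oct_ring := oct_unfold; congr (((_, _), (_, _)), ((_, _), (_, _))); ring.

Section OctonionAlgebra.
Variable R : realType.
Implicit Types (p q : oct R) (r s : R).

Lemma oct_conjM p q : oct_conj (oct_mul p q) = oct_mul (oct_conj q) (oct_conj p).
Proof. by oct_case p; oct_case q; oct_ring. Qed.

Lemma oct_conjK p : oct_conj (oct_conj p) = p.
Proof. by oct_case p; oct_ring. Qed.

Lemma oct_conjZ r p : oct_conj (oct_scale r p) = oct_scale r (oct_conj p).
Proof. by oct_case p; oct_ring. Qed.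

Lemma oct_scalerA r s p : oct_scale r (oct_scale s p) = oct_scale (r * s) p.
Proof. by oct_case p; oct_ring. Qed.

Lemma oct_scale1r p : oct_scale 1 p = p.
Proof. by oct_case p; oct_ring. Qed.

Lemma oct_scalerAl r p q : oct_mul (oct_scale r p) q = oct_scale r (oct_mul p q).
Proof. by oct_case p; oct_case q; oct_ring. Qed.

Lemma oct_scalerAr r p q : oct_mul p (oct_scale r q) = oct_scale r (oct_mul p q).
Proof. by oct_case p; oct_case q; oct_ring. Qed.

Lemma oct_norm2M p q : oct_norm2 (oct_mul p q) = oct_norm2 p * oct_norm2 q.
Proof. by oct_case p; oct_case q; oct_unfold; ring. Qed.

Lemma oct_norm2_eq0 p : oct_norm2 p = 0 -> p = oct0 R.
Proof.
case: p => [[[a0 a1] [a2 a3]] [[a4 a5] [a6 a7]]] /eqP.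
by rewrite /oct_norm2 !paddr_eq0 ?addr_ge0 ?sqr_ge0 // !sqrf_eq0
  => /andP[/andP[/andP[/andP[/andP[/andP[/andP[/eqP-> /eqP->] /eqP->] /eqP->]
     /eqP->] /eqP->] /eqP->] /eqP->].
Qed.

Lemma oct_mul_conjK p q : oct_mul p (oct_mul (oct_conj p) q) = oct_scale (oct_norm2 p) q.
Proof. by oct_case p; oct_case q; oct_ring. Qed.

Lemma oct_invM p q : oct_inv (oct_mul p q) = oct_mul (oct_inv q) (oct_inv p).
Proof.
by rewrite /oct_inv oct_conjM oct_scalerAl oct_scalerAr oct_scalerA oct_norm2M invfM mulrC.
Qed.

Lemma oct_mulVK p q : oct_norm2 p != 0 -> oct_mul p (oct_mul (oct_inv p) q) = q.
Proof.
by move=> np0; rewrite oct_scalerAl oct_scalerAr oct_mul_conjK oct_scalerA mulVf ?oct_scale1r.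
Qed.

Lemma oct_mul_conj_invMl p q : oct_norm2 p = oct_norm2 q -> oct_norm2 p != 0 ->
  oct_mul q (oct_conj (oct_mul (oct_inv p) q)) = p.
Proof.
move=> npq np0; rewrite oct_conjM /oct_inv oct_conjZ oct_conjK.
by rewrite !oct_scalerAr oct_mul_conjK oct_scalerA -npq mulVf ?oct_scale1r.
Qed.

Lemma oct_bracketE (x y z : oct R) :
  oct_bracket x y z = oct_mul (oct_inv (oct_mul (oct_mul x y) z)) (oct_mul x (oct_mul y z)).
Proof. by rewrite /oct_bracket !oct_invM. Qed.

End OctonionAlgebra.

Theorem theorem1 (R : realType) (x y z : oct R) :
  x <> oct0 R -> y <> oct0 R -> z <> oct0 R ->
  oct_mul (oct_mul (oct_mul x y) z) (oct_bracket x y z) = oct_mul x (oct_mul y z) /\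
  oct_mul (oct_mul x y) z = oct_mul (oct_mul x (oct_mul y z)) (oct_conj (oct_bracket x y z)).
Proof.
move=> /eqP x0 /eqP y0 /eqP z0.
have norm2_neq0 (p : oct R) : p != oct0 R -> oct_norm2 p != 0.
  by apply: contraNneq => /oct_norm2_eq0 ->.
have na0 : oct_norm2 (oct_mul (oct_mul x y) z) != 0.
  by rewrite !oct_norm2M !mulf_neq0 ?norm2_neq0.
have nab : oct_norm2 (oct_mul (oct_mul x y) z) = oct_norm2 (oct_mul x (oct_mul y z)).
  by rewrite !oct_norm2M mulrA.
rewrite oct_bracketE; split; first exact: oct_mulVK.
by rewrite oct_mul_conj_invMl.
Qed.
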